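(* The group $\mathbb{G}=\mathrm{Aut}(\mathbf{R},<)$ is split.
   Context: $\mathbb{G}$ is the group of order-preserving bijections of $\mathbf{R}$, topologized so that pointwise stabilizers of finite subsets of $\mathbf{R}$ form a neighborhood basis of the identity; it is a pro-oligomorphic group. A pro-oligomorphic group $G$ is split if for every pro-oligomorphic group $H$ (Hausdorff, open subgroups form a neighborhood basis of $1$, $U\backslash H/V$ finite for open $U,V$), every transitive $(G\times H)$-set (action with open stabilizers) is isomorphic to $X\times Y$ for a transitive $G$-set $X$ and a transitive $H$-set $Y$. *)

From HB Require Import structures.
From Stdlib Require Import Reals.
From mathcomp Require Import all_boot all_order all_algebra.
From mathcomp Require Import all_classical all_reals all_analysis.

Set Implicit Arguments.
Unset Strict Implicit.
Unset Printing Implicit Defensive.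
Local Open Scope classical_set_scope.

Definition is_topgroup (H : topologicalType) (mul : H -> H -> H)
    (inv : H -> H) (one : H) : Prop :=
  [/\ (forall a b c, mul a (mul b c) = mul (mul a b) c),
      (forall a, mul one a = a /\ mul a one = a),
      (forall a, mul (inv a) a = one /\ mul a (inv a) = one),
      continuous (fun p : H * H => mul p.1 p.2) &
      continuous inv].

Definition is_subgroup (H : Type) (mul : H -> H -> H) (inv : H -> H) (one : H)
    (U : set H) : Prop :=
  [/\ U one, (forall a b, U a -> U b -> U (mul a b)) & (forall a, U a -> U (inv a))].

Definition open_subgroup (H : topologicalType) (mul : H -> H -> H)
    (inv : H -> H) (one : H) (U : set H) : Prop :=
  is_subgroup mul inv one U /\ open U.

Definition double_coset (H : Type) (mul : H -> H -> H) (U V : set H) (h : H) : set H :=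
  [set z | exists2 u, U u & exists2 v, V v & z = mul (mul u h) v].

Definition pro_oligomorphic (H : topologicalType) (mul : H -> H -> H)
    (inv : H -> H) (one : H) : Prop :=
  [/\ is_topgroup mul inv one,
      hausdorff_space H,
      (forall N, nbhs one N -> exists2 U, open_subgroup mul inv one U & U `<=` N) &
      (forall U V, open_subgroup mul inv one U -> open_subgroup mul inv one V ->
         finite_set [set D | exists h, D = double_coset mul U V h])].

Definition transitive_Kset (K : topologicalType) (mul : K -> K -> K) (one : K)
    (X : Type) (act : K -> X -> X) : Prop :=
  [/\ (forall x, act one x = x),
      (forall a b x, act (mul a b) x = act a (act b x)),
      (forall x, open [set k | act k x = x]),
      (exists x : X, True) &
      (forall x y, exists k, act k x = y)].

Definition prod_mul (K1 K2 : Type) (m1 : K1 -> K1 -> K1) (m2 : K2 -> K2 -> K2)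
    (a b : K1 * K2) : K1 * K2 := (m1 a.1 b.1, m2 a.2 b.2).

Definition is_split (G : topologicalType) (mulG : G -> G -> G) (oneG : G) : Prop :=
  forall (H : topologicalType) (mulH : H -> H -> H) (invH : H -> H) (oneH : H),
    pro_oligomorphic mulH invH oneH ->
  forall (Z : Type) (act : G * H -> Z -> Z),
    transitive_Kset (prod_mul mulG mulH) (oneG, oneH) act ->
  exists (X : Type) (actX : G -> X -> X) (Y : Type) (actY : H -> Y -> Y),
    [/\ transitive_Kset mulG oneG actX,
        transitive_Kset mulH oneH actY &
        exists phi : Z -> X * Y, bijective phi /\
          forall g h z, phi (act (g, h) z) = (actX g (phi z).1, actY h (phi z).2)].

Definition autR := {f : R -> R |
  bijective f /\ forall x y, Rlt x y <-> Rlt (f x) (f y)}.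

HB.instance Definition _ := gen_eqMixin autR.
HB.instance Definition _ := gen_choiceMixin autR.

Definition autR_fun (g : autR) : R -> R := proj1_sig g.

Definition pstab (F : set R) : set autR :=
  [set h | forall x, F x -> autR_fun h x = x].

Lemma autR_comp_subproof (f g : autR) :
  bijective (autR_fun f \o autR_fun g) /\
  forall x y, Rlt x y <-> Rlt ((autR_fun f \o autR_fun g) x) ((autR_fun f \o autR_fun g) y).
Proof.
case: f => f [bf mf]; case: g => g [bg mg]; split.
  exact: bij_comp.
by move=> x y /=; rewrite (mg x y) (mf (g x) (g y)).
Qed.

Definition autR_mul (f g : autR) : autR := exist _ _ (autR_comp_subproof f g).

Lemma autR_one_subproof : bijective (@id R) /\ forall x y, Rlt x y <-> Rlt (id x) (id y).
Proof. by split=> //; exists id. Qed.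

Definition autR_one : autR := exist _ _ autR_one_subproof.

Definition autR_open : set_system autR :=
  [set A | forall g, A g ->
     exists2 F : set R, finite_set F & forall h, pstab F h -> A (autR_mul g h)].

Lemma autR_openT : autR_open setT.
Proof. by move=> g _; exists set0 => //; exact: finite_set0. Qed.

Lemma autR_openI : setI_closed autR_open.
Proof.
move=> A B oA oB g [Ag Bg].
have [F1 fF1 h1] := oA g Ag; have [F2 fF2 h2] := oB g Bg.
exists (F1 `|` F2); first by rewrite finite_setU.
move=> h hF; split; [apply: h1 | apply: h2]; move=> x Fx; apply: hF; [left|right]; exact: Fx.
Qed.

Lemma autR_open_bigU (I : Type) (f : I -> set autR) :
  (forall i, autR_open (f i)) -> autR_open (\bigcup_i f i).
Proof.
move=> ofi g [i _ fig]; have [F fF hF] := ofi i g fig.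
by exists F => // h /hF fh; exists i.
Qed.

HB.instance Definition _ := isOpenTopological.Build autR
  autR_openT autR_openI autR_open_bigU.

From HB Require Import structures.
From Stdlib Require Import Reals Lra.
From mathcomp Require Import all_boot all_order all_algebra.
From mathcomp Require Import all_classical all_reals all_analysis.
From mathcomp Require Import Rstruct.

Set Implicit Arguments.
Unset Strict Implicit.
Unset Printing Implicit Defensive.
Local Open Scope classical_set_scope.
Local Open Scope R_scope.

(* Let Z be a transitive (G x H)-set and z a point of Z.  The elements g of G
   fixing z form an open subgroup U of G, and if (g, h) fixes z then g
   normalizes U.  When every open subgroup of G is self-normalizing, g itself
   fixes z; hence the stabilizers of Z are products, and z |-> (Hz, Gz)
   identifies Z with (Z/H) x (Z/G).
   For G = Aut(R,<), an open subgroup U contains the pointwise stabilizer G_A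
   of a finite set A.  If g normalizes U, then U also contains G_(gA), and
   piecewise-linear bumps show that G_A and G_B generate a group containing
   G_(A \ {a}) whenever a is not in B.  Shrinking A in this way until gA = A,
   the order-preserving g fixes A pointwise, so g lies in G_A <= U. *)

Definition is_group (T : Type) (mul : T -> T -> T) (inv : T -> T) (one : T) : Prop :=
  [/\ (forall a b c, mul a (mul b c) = mul (mul a b) c),
      (forall a, mul one a = a /\ mul a one = a) &
      (forall a, mul (inv a) a = one /\ mul a (inv a) = one)].

Lemma topgroup_group (T : topologicalType) (mul : T -> T -> T) (inv : T -> T) (one : T) :
  is_topgroup mul inv one -> is_group mul inv one.
Proof. by case. Qed.

Lemma open_sectionl (T U : topologicalType) (D : set (T * U)) (u : U) :
  open D -> open [set t | D (t, u)].
Proof.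
move=> oD; apply: (open_comp (f := fun t => (t, u))) oD => t _.
by apply: cvg_pair; [exact: cvg_id | exact: cvg_cst].
Qed.

Lemma open_sectionr (T U : topologicalType) (D : set (T * U)) (t : T) :
  open D -> open [set u | D (t, u)].
Proof.
move=> oD; apply: (open_comp (f := fun u => (t, u))) oD => u _.
by apply: cvg_pair; [exact: cvg_cst | exact: cvg_id].
Qed.

Section OrbitSpace.
Variables (B Z : Type) (mulB : B -> B -> B) (invB : B -> B) (oneB : B).
Variable be : B -> Z -> Z.
Hypotheses (be1 : forall z, be oneB z = z)
  (beM : forall b b' z, be (mulB b b') z = be b (be b' z))
  (mulVB : forall b, mulB (invB b) b = oneB).

Definition orbit (z : Z) : set Z := [set w | exists b, be b z = w].

Definition orbit_space := {S : set Z | exists z, S = orbit z}.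

Definition orbit_of (z : Z) : orbit_space := exist _ (orbit z) (ex_intro _ z erefl).

Definition orbit_repr (S : orbit_space) : Z := sval (cid (svalP S)).

Lemma orbit_reprK (S : orbit_space) : orbit_of (orbit_repr S) = S.
Proof. by case: S => S hS; apply: eq_exist; rewrite /orbit_repr /=; case: cid. Qed.

Lemma orbit_ofP z z' : orbit_of z = orbit_of z' <-> exists b, be b z = z'.
Proof.
split=> [/(congr1 sval) /= e | [b <-]].
  have : orbit z' z' by exists oneB.
  by rewrite -e.
apply: eq_exist; apply/seteqP; split=> w [c <-].
  by exists (mulB c (invB b)); rewrite beM -(beM (invB b)) mulVB be1.
by exists (mulB c b); rewrite beM.
Qed.

Lemma orbit_of_act b z : orbit_of (be b z) = orbit_of z.
Proof. by apply/orbit_ofP; exists (invB b); rewrite -beM mulVB be1. Qed.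

Variables (A : topologicalType) (al : A -> Z -> Z).
Hypothesis al_be : forall a b z, al a (be b z) = be b (al a z).

Definition orbit_act (a : A) (S : orbit_space) : orbit_space :=
  orbit_of (al a (orbit_repr S)).

Lemma orbit_act_of a z : orbit_act a (orbit_of z) = orbit_of (al a z).
Proof.
rewrite /orbit_act.
have /orbit_ofP [b <-] : orbit_of z = orbit_of (orbit_repr (orbit_of z)).
  by rewrite orbit_reprK.
by rewrite al_be orbit_of_act.
Qed.

Lemma orbit_space_transitive (mulA : A -> A -> A) (oneA : A) (z0 : Z) :
  (forall z, al oneA z = z) ->
  (forall a a' z, al (mulA a a') z = al a (al a' z)) ->
  (forall b z, open [set a | be b (al a z) = z]) ->
  (forall z z', exists a b, be b (al a z) = z') ->
  transitive_Kset mulA oneA orbit_act.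
Proof.
move=> al1 alM al_open al_trans; split.
- by move=> S; rewrite -[S]orbit_reprK orbit_act_of al1.
- by move=> a a' S; rewrite -[S]orbit_reprK !orbit_act_of alM.
- move=> S; rewrite -[S]orbit_reprK; set z := orbit_repr S.
  have -> : [set a | orbit_act a (orbit_of z) = orbit_of z] =
            \bigcup_b [set a | be b (al a z) = z].
    apply/seteqP; split=> a /=; rewrite orbit_act_of.
      by move=> /orbit_ofP [b e]; exists b.
    by move=> [b _ e]; apply/orbit_ofP; exists b.
  by apply: bigcup_open => b _; exact: al_open.
- by exists (orbit_of z0).
- move=> S S'; rewrite -[S]orbit_reprK -[S']orbit_reprK.
  have [a [b <-]] := al_trans (orbit_repr S) (orbit_repr S').
  by exists a; rewrite orbit_act_of orbit_of_act.
Qed.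

End OrbitSpace.

Arguments orbit_of {B Z} be z.
Arguments orbit_act {B Z} be {A} al a S.

Section ProductAction.
Variables (G H : topologicalType).
Variables (mulG : G -> G -> G) (invG : G -> G) (oneG : G).
Variables (mulH : H -> H -> H) (invH : H -> H) (oneH : H).
Hypotheses (groupG : is_group mulG invG oneG) (groupH : is_group mulH invH oneH).
Variables (Z : Type) (act : G * H -> Z -> Z).
Hypothesis actZ : transitive_Kset (prod_mul mulG mulH) (oneG, oneH) act.

Let mul1G g : mulG oneG g = g. Proof. by case: groupG => _ /(_ g) []. Qed.
Let mulG1 g : mulG g oneG = g. Proof. by case: groupG => _ /(_ g) []. Qed.
Let mulVG g : mulG (invG g) g = oneG. Proof. by case: groupG => _ _ /(_ g) []. Qed.
Let mulGV g : mulG g (invG g) = oneG. Proof. by case: groupG => _ _ /(_ g) []. Qed.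
Let mul1H h : mulH oneH h = h. Proof. by case: groupH => _ /(_ h) []. Qed.
Let mulH1 h : mulH h oneH = h. Proof. by case: groupH => _ /(_ h) []. Qed.
Let mulVH h : mulH (invH h) h = oneH. Proof. by case: groupH => _ _ /(_ h) []. Qed.
Let mulHV h : mulH h (invH h) = oneH. Proof. by case: groupH => _ _ /(_ h) []. Qed.

Let act1 z : act (oneG, oneH) z = z. Proof. by case: actZ. Qed.
Let actM g h g' h' z : act (mulG g g', mulH h h') z = act (g, h) (act (g', h') z).
Proof. by case: actZ => _ /(_ (g, h) (g', h') z). Qed.
Let act_open z : open [set p | act p z = z]. Proof. by case: actZ. Qed.
Let act_trans z z' : exists p, act p z = z'. Proof. by case: actZ. Qed.

Let actG g := act (g, oneH).
Let actH h := act (oneG, h).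

Let actG1 z : actG oneG z = z. Proof. exact: act1. Qed.
Let actH1 z : actH oneH z = z. Proof. exact: act1. Qed.
Let actGM g g' z : actG (mulG g g') z = actG g (actG g' z).
Proof. by rewrite /actG -actM mulH1. Qed.
Let actHM h h' z : actH (mulH h h') z = actH h (actH h' z).
Proof. by rewrite /actH -actM mulG1. Qed.
Let act_pairE g h z : act (g, h) z = actG g (actH h z).
Proof. by rewrite /actG /actH -actM mulG1 mul1H. Qed.
Let act_pairEr g h z : act (g, h) z = actH h (actG g z).
Proof. by rewrite /actG /actH -actM mul1G mulH1. Qed.
Let actGH g h z : actG g (actH h z) = actH h (actG g z).
Proof. by rewrite -act_pairE act_pairEr. Qed.

Lemma stabilizer_open_subgroup z :
  open_subgroup mulG invG oneG [set g | act (g, oneH) z = z].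
Proof.
split; last exact: (open_sectionl oneH (@act_open z)).
split=> /= [|g g' gz g'z|g gz]; first exact: act1.
  by rewrite -[oneH]mulH1 actM g'z gz.
by rewrite -{1}gz -actM mulVG mulH1 act1.
Qed.

Lemma stabilizer_conj g h k z : act (g, h) z = z -> act (k, oneH) z = z ->
  act (mulG g (mulG k (invG g)), oneH) z = z.
Proof.
move=> ghz kz.
have ghz' : act (invG g, invH h) z = z by rewrite -{1}ghz -actM mulVG mulVH act1.
by rewrite -(mulHV h) -(mul1H (invH h)) !actM ghz' kz ghz.
Qed.

Let orbitHP := @orbit_ofP _ _ _ _ _ _ actH1 actHM mulVH.
Let orbitGP := @orbit_ofP _ _ _ _ _ _ actG1 actGM mulVG.
Let orbitH_act := orbit_of_act actH1 actHM mulVH.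
Let orbitG_act := orbit_of_act actG1 actGM mulVG.
Let actHG h g z : actH h (actG g z) = actG g (actH h z). Proof. by rewrite actGH. Qed.

Let orbit_spaceH_transitive (z0 : Z) :
  transitive_Kset mulG oneG (orbit_act actH actG).
Proof.
apply: (orbit_space_transitive actH1 actHM mulVH actGH z0 actG1 actGM).
  move=> h z; rewrite (_ : [set g | _] = [set g | act (g, h) z = z]).
    exact: open_sectionl (@act_open z).
  by apply/funext => g /=; rewrite act_pairEr.
move=> z z'; have [[g h] e] := act_trans z z'.
by exists g, h; rewrite -act_pairEr.
Qed.

Let orbit_spaceG_transitive (z0 : Z) :
  transitive_Kset mulH oneH (orbit_act actG actH).
Proof.
apply: (orbit_space_transitive actG1 actGM mulVG actHG z0 actH1 actHM).
  move=> g z; rewrite (_ : [set h | _] = [set h | act (g, h) z = z]).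
    exact: open_sectionr (@act_open z).
  by apply/funext => h /=; rewrite act_pairE.
move=> z z'; have [[g h] e] := act_trans z z'.
by exists h, g; rewrite -act_pairE.
Qed.

Let orbit_pair_bijective :
  (forall g h z, act (g, h) z = z -> act (g, oneH) z = z) ->
  bijective (fun z => (orbit_of actH z, orbit_of actG z)).
Proof.
move=> stab; rewrite -setTT_bijective; split=> //.
  move=> z z' _ _ /pair_equal_spec [/orbitHP [h e1] /orbitGP [g e2]].
  have gz : actG (invG g) z = z.
    by apply: (stab _ h); rewrite act_pairE e1 -e2 -actGM mulVG actG1.
  by rewrite -e2 -{2}gz -actGM mulGV actG1.
move=> [S S'] _; rewrite -[S]orbit_reprK -[S']orbit_reprK.
have [[g h] e] := act_trans (orbit_repr S) (orbit_repr S').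
by exists (actH h (orbit_repr S)) => //=; rewrite orbitH_act -e act_pairE orbitG_act.
Qed.

Lemma product_action_split :
  (forall g h z, act (g, h) z = z -> act (g, oneH) z = z) ->
  exists (X : Type) (actX : G -> X -> X) (Y : Type) (actY : H -> Y -> Y),
    [/\ transitive_Kset mulG oneG actX,
        transitive_Kset mulH oneH actY &
        exists phi : Z -> X * Y, bijective phi /\
          forall g h z, phi (act (g, h) z) = (actX g (phi z).1, actY h (phi z).2)].
Proof.
move=> stab; have [_ _ _ [z0 _] _] := actZ.
exists (orbit_space actH), (orbit_act actH actG), (orbit_space actG), (orbit_act actG actH).
split; [exact: orbit_spaceH_transitive z0 | exact: orbit_spaceG_transitive z0 |].
exists (fun z => (orbit_of actH z, orbit_of actG z)).
split=> [|g h z /=]; first exact: orbit_pair_bijective.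
rewrite (orbit_act_of actH1 actHM mulVH actGH) (orbit_act_of actG1 actGM mulVG actHG).
by rewrite {1}act_pairEr act_pairE orbitH_act orbitG_act.
Qed.

End ProductAction.

Lemma self_normalizing_split (G : topologicalType) (mulG : G -> G -> G) (invG : G -> G)
    (oneG : G) :
  is_group mulG invG oneG ->
  (forall (U : set G) g, open_subgroup mulG invG oneG U ->
     (forall k, U k -> U (mulG g (mulG k (invG g)))) -> U g) ->
  is_split mulG oneG.
Proof.
move=> groupG self_norm H mulH invH oneH [/topgroup_group groupH _ _ _] Z act actZ.
apply: (product_action_split groupG groupH actZ) => g h z ghz.
apply: self_norm (stabilizer_open_subgroup groupG groupH actZ z) _ => k kz.
exact: (stabilizer_conj groupG groupH actZ ghz kz).
Qed.

Lemma autR_ext (f g : autR) : autR_fun f =1 autR_fun g -> f = g.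
Proof. by case: f g => [f pf] [g pg] /funext /= fg; apply: eq_exist. Qed.

Lemma autR_lt (g : autR) x y : x < y <-> autR_fun g x < autR_fun g y.
Proof. exact: (proj2 (svalP g)). Qed.

Lemma autR_inverse_ex (g : autR) :
  exists2 f : R -> R, cancel (autR_fun g) f & cancel f (autR_fun g).
Proof. by case: (proj1 (svalP g)) => f; exists f. Qed.

Definition autR_invf (g : autR) : R -> R := s2val (cid2 (autR_inverse_ex g)).

Lemma autR_funK (g : autR) : cancel (autR_fun g) (autR_invf g).
Proof. exact: (s2valP (cid2 (autR_inverse_ex g))). Qed.

Lemma autR_invfK (g : autR) : cancel (autR_invf g) (autR_fun g).
Proof. exact: (s2valP' (cid2 (autR_inverse_ex g))). Qed.

Lemma autR_invf_incr (g : autR) x y : x < y -> autR_invf g x < autR_invf g y.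
Proof. by move=> lt_xy; apply/(autR_lt g); rewrite !autR_invfK. Qed.

Lemma increasing_autR_subproof (f f' : R -> R) :
  (forall x y, x < y -> f x < f y) -> cancel f' f ->
  bijective f /\ forall x y, x < y <-> f x < f y.
Proof.
move=> incr f'K.
have lt_f x y : f x < f y -> x < y.
  by case: (Rtotal_order x y) => [// | [-> | /incr]]; lra.
split; last by move=> x y; split; [exact: incr | exact: lt_f].
exists f' => // x.
by case: (Rtotal_order (f' (f x)) x) => [/incr | [// | /incr]]; rewrite f'K; lra.
Qed.

Definition mk_autR (f f' : R -> R) (incr : forall x y, x < y -> f x < f y)
    (f'K : cancel f' f) : autR :=
  exist _ f (increasing_autR_subproof incr f'K).

Definition autR_inv (g : autR) : autR := mk_autR (@autR_invf_incr g) (autR_funK g).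

Lemma autR_group : is_group autR_mul autR_inv autR_one.
Proof.
split=> [f g h | g | g]; [| split | split]; apply: autR_ext => x //=.
  exact: autR_funK.
exact: autR_invfK.
Qed.

Definition lin (p q p' q' t : R) : R := p' + (t - p) * ((q' - p') / (q - p)).

Lemma lin_incr p q p' q' t t' : p < q -> p' < q' -> t < t' ->
  lin p q p' q' t < lin p q p' q' t'.
Proof.
move=> pq pq' tt'; rewrite /lin.
have : 0 < (t' - t) * ((q' - p') / (q - p)).
  by apply: Rmult_lt_0_compat; [lra | apply: Rdiv_lt_0_compat; lra].
lra.
Qed.

Lemma lin_l p q p' q' : p < q -> lin p q p' q' p = p'.
Proof. by move=> pq; rewrite /lin; field; lra. Qed.

Lemma lin_r p q p' q' : p < q -> lin p q p' q' q = q'.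
Proof. by move=> pq; rewrite /lin; field; lra. Qed.

Lemma lin_range p q p' q' t : p < q -> p' < q' -> p <= t <= q ->
  p' <= lin p q p' q' t <= q'.
Proof.
move=> pq pq' [pt tq].
have := lin_l p' q' pq; have := lin_r p' q' pq.
case: (Req_dec t p) => [-> | tp]; first lra.
case: (Req_dec t q) => [-> | tq']; first lra.
have := @lin_incr p q p' q' p t pq pq'; have := @lin_incr p q p' q' t q pq pq'.
lra.
Qed.

Lemma linK p q p' q' : p < q -> p' < q' -> cancel (lin p' q' p q) (lin p q p' q').
Proof. by move=> pq pq' t; rewrite /lin; field; lra. Qed.

Definition increasing_on (P : R -> Prop) (f : R -> R) :=
  forall t t', P t -> P t' -> t < t' -> f t < f t'.

Lemma increasing_on_glue (P Q S : R -> Prop) f b :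
  increasing_on P f -> increasing_on Q f -> P b -> Q b ->
  (forall t, S t -> t <= b -> P t) -> (forall t, S t -> b <= t -> Q t) ->
  increasing_on S f.
Proof.
move=> incrP incrQ Pb Qb SP SQ t t' St St' tt'.
case: (Rle_dec t' b) => t'b; first by apply: incrP => //; apply: SP => //; lra.
case: (Rle_dec b t) => bt; first by apply: incrQ => //; apply: SQ => //; lra.
have : f t < f b by apply: incrP => //; [apply: SP => //; lra | lra].
have : f b < f t' by apply: incrQ => //; [apply: SQ => //; lra | lra].
lra.
Qed.

Definition bumpf (u v x y t : R) : R :=
  if Rle_dec t u then t else if Rle_dec t x then lin u x u y t
  else if Rle_dec t v then lin x v y v t else t.

Section Bump.
Variables u v x y : R.

Lemma bumpf_out t : u < x < v -> u < y < v -> t <= u \/ v <= t -> bumpf u v x y t = t.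
Proof.
move=> hx hy ht; rewrite /bumpf.
case: Rle_dec => // tu; case: Rle_dec => tx; first lra.
case: Rle_dec => // tv.
have e : t = v by lra.
by subst t; rewrite lin_r //; lra.
Qed.

Lemma bumpf_l t : u < x < v -> u < y < v -> u <= t <= x -> bumpf u v x y t = lin u x u y t.
Proof.
move=> hx hy ht; rewrite /bumpf.
case: Rle_dec => tu; last by case: Rle_dec => // ?; lra.
have e : t = u by lra.
by subst t; rewrite lin_l //; lra.
Qed.

Lemma bumpf_r t : u < x < v -> u < y < v -> x <= t <= v -> bumpf u v x y t = lin x v y v t.
Proof.
move=> hx hy ht; rewrite /bumpf.
case: Rle_dec => tu; first lra.
case: Rle_dec => tx; last by case: Rle_dec => // ?; lra.
have e : t = x by lra.
by subst t; rewrite lin_r ?lin_l //; lra.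
Qed.

Lemma bumpf_x : u < x < v -> u < y < v -> bumpf u v x y x = y.
Proof. by move=> hx hy; rewrite bumpf_l ?lin_r //; lra. Qed.

Lemma bumpf_incr : u < x < v -> u < y < v ->
  forall t t', t < t' -> bumpf u v x y t < bumpf u v x y t'.
Proof.
move=> hx hy t t' tt'.
have incr_ul : increasing_on (fun t => t <= u) (bumpf u v x y).
  by move=> s s' su s'u ss'; rewrite !bumpf_out //; left.
have incr_vr : increasing_on (fun t => v <= t) (bumpf u v x y).
  by move=> s s' vs vs' ss'; rewrite !bumpf_out //; right.
have incr_ux : increasing_on (fun t => u <= t <= x) (bumpf u v x y).
  by move=> s s' hs hs' ss'; rewrite !bumpf_l //; apply: lin_incr; lra.
have incr_xv : increasing_on (fun t => x <= t <= v) (bumpf u v x y).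
  by move=> s s' hs hs' ss'; rewrite !bumpf_r //; apply: lin_incr; lra.
have incr_x : increasing_on (fun t => t <= x) (bumpf u v x y).
  by apply: (increasing_on_glue incr_ul incr_ux (b := u)) => /= *; lra.
have x_incr : increasing_on (fun t => x <= t) (bumpf u v x y).
  by apply: (increasing_on_glue incr_xv incr_vr (b := v)) => /= *; lra.
by apply: (increasing_on_glue (S := fun => True) incr_x x_incr (b := x)) => //= *; lra.
Qed.

End Bump.

Lemma bumpfK u v x y : u < x < v -> u < y < v -> cancel (bumpf u v y x) (bumpf u v x y).
Proof.
move=> hx hy s.
case: (Rle_dec s u) => su; first by rewrite !bumpf_out //; left.
case: (Rle_dec v s) => vs; first by rewrite !bumpf_out //; right.
case: (Rle_dec s y) => sy.
  have := @lin_range u y u x s; rewrite (bumpf_l hy hx); last lra.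
  by move=> /(_ ltac:(lra) ltac:(lra) ltac:(lra)) hr; rewrite bumpf_l ?linK //; lra.
have := @lin_range y v x v s; rewrite (bumpf_r hy hx); last lra.
by move=> /(_ ltac:(lra) ltac:(lra) ltac:(lra)) hr; rewrite bumpf_r ?linK //; lra.
Qed.

Lemma autR_bump u v x y : u < x < v -> u < y < v ->
  exists2 g : autR, autR_fun g x = y & pstab [set t | t <= u \/ v <= t] g.
Proof.
move=> hx hy; exists (mk_autR (bumpf_incr hx hy) (bumpfK hx hy)).
  exact: bumpf_x.
by move=> t; exact: bumpf_out.
Qed.

Lemma seq_avoids_ball (s : seq R) a : a \notin s ->
  exists2 e, 0 < e & forall x, x \in s -> x <= a - e \/ a + e <= x.
Proof.
elim: s => [_ | y s IH]; first by exists 1 => //; lra.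
rewrite in_cons negb_or => /andP [/eqP ay /IH [e e0 he]].
have [d d0 hd] : exists2 d, 0 < d & y <= a - d \/ a + d <= y.
  by case: (Rlt_le_dec y a) => ya; [exists (a - y) | exists (y - a)]; lra.
exists (Rmin e d); first exact: Rmin_pos.
move=> z; have := Rmin_l e d; have := Rmin_r e d.
by rewrite in_cons => le_e le_d /orP [/eqP -> | /he]; lra.
Qed.

Lemma seq_min_ex (s : seq R) (P : R -> Prop) : (exists2 a, a \in s & P a) ->
  exists m, [/\ m \in s, P m & forall b, b \in s -> P b -> m <= b].
Proof.
elim: s => [[a] | y s IH ex]; first by rewrite in_nil.
case: (EM (exists2 a, a \in s & P a)) => [/IH [m [ms Pm min_m]] | no_s].
  case: (EM (P y /\ y < m)) => [[Py ym] | not_y].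
    exists y; split; rewrite ?mem_head // => b; rewrite in_cons => /orP [/eqP -> | /min_m].
      lra.
    by move=> /[apply]; lra.
  exists m; split; rewrite ?in_cons ?ms ?orbT // => b.
  rewrite in_cons => /orP [/eqP -> Py | /min_m //].
  by apply: Rnot_lt_le => ym; apply: not_y.
have Py : P y.
  by case: ex => a; rewrite in_cons => /orP [/eqP -> // | as_ Pa]; case: no_s; exists a.
exists y; split; rewrite ?mem_head // => b; rewrite in_cons => /orP [/eqP -> | bs Pb].
  lra.
by case: no_s; exists b.
Qed.

Lemma increasing_stable_le (f : R -> R) (s : seq R) :
  (forall x y, x < y -> f x < f y) -> (forall x, x \in s -> f x \in s) ->
  forall x, x \in s -> x <= f x.
Proof.
move=> incr fs x xs; apply: Rnot_lt_le => fx_lt.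
have [m [ms fm_lt min_m]] := seq_min_ex (ex_intro2 (fun a => a \in s) (fun a => f a < a) x xs fx_lt).
by have := min_m _ (fs m ms) (incr _ _ fm_lt); lra.
Qed.

(* The reverse inequality comes from the conjugate t |-> - f (- t) on - s. *)
Lemma increasing_stable_fixed (f : R -> R) (s : seq R) :
  (forall x y, x < y -> f x < f y) -> (forall x, x \in s -> f x \in s) ->
  forall x, x \in s -> f x = x.
Proof.
move=> incr fs x xs; apply: Rle_antisym; last exact: increasing_stable_le incr fs x xs.
have incr' t t' : t < t' -> - f (- t) < - f (- t').
  by move=> tt'; apply: Ropp_lt_contravar; apply: incr; lra.
have fs' t : t \in map Ropp s -> - f (- t) \in map Ropp s.
  by move=> /mapP [{}t ts ->]; rewrite Ropp_involutive; apply: map_f; exact: fs.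
have := increasing_stable_le incr' fs' (map_f Ropp xs).
by rewrite Ropp_involutive; lra.
Qed.

Lemma autR_move_near (s : seq R) a c e : 0 < e ->
  (forall x, x \in s -> x < Rmin a c \/ Rmax a c < x) ->
  exists2 q : autR, pstab [set` a :: s] q & a - e < autR_fun q c < a + e.
Proof.
move=> e0 sep.
have c_s : c \notin s.
  by apply/negP => /sep; have := Rmin_r a c; have := Rmax_r a c; lra.
have [d d0 hd] := seq_avoids_ball c_s.
case: (Rtotal_order a c) => [ac | [<- | ca]].
- have [m m0 [me mc]] : exists2 m, 0 < m & m <= e /\ m <= c - a.
    by exists (Rmin e (c - a)); [apply: Rmin_pos; lra | split; [apply: Rmin_l | apply: Rmin_r]].
  have [q qc qout] := @autR_bump a (c + d) c (a + m / 2) ltac:(lra) ltac:(lra).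
  exists q; last by rewrite qc; lra.
  move=> x /=; rewrite in_cons => /orP [/eqP -> | xs]; apply: qout; first by left; lra.
  by move: (hd x xs) (sep x xs) => /=; rewrite Rmin_left ?Rmax_right; lra.
- by exists autR_one => //=; lra.
- have [m m0 [me mc]] : exists2 m, 0 < m & m <= e /\ m <= a - c.
    by exists (Rmin e (a - c)); [apply: Rmin_pos; lra | split; [apply: Rmin_l | apply: Rmin_r]].
  have [q qc qout] := @autR_bump (c - d) a c (a - m / 2) ltac:(lra) ltac:(lra).
  exists q; last by rewrite qc; lra.
  move=> x /=; rewrite in_cons => /orP [/eqP -> | xs]; apply: qout; first by right; lra.
  by move: (hd x xs) (sep x xs) => /=; rewrite Rmin_right ?Rmax_left; lra.
Qed.

(* For c = f a: q in G_A moves c to within d of a, p in G_B moves it back to a,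
   and both fix A \ {a}, so p q f lies in G_A. *)
Lemma pstab_remove (K : set autR) (A B : seq R) a :
  is_subgroup autR_mul autR_inv autR_one K ->
  pstab [set` A] `<=` K -> pstab [set` B] `<=` K -> a \notin B ->
  pstab [set` [seq x <- A | x != a]] `<=` K.
Proof.
move=> [_ KM KV] KA KB aB f fA'.
set A' := [seq x <- A | x != a] in fA' *; set c := autR_fun f a.
have sep x : x \in A' -> x < Rmin a c \/ Rmax a c < x.
  move=> xA'; have fx := fA' x xA'.
  have /eqP xa : x != a by move: xA'; rewrite mem_filter => /andP [].
  case: (Rtotal_order x a) => [lt_xa | [// | lt_ax]].
    by left; apply: Rmin_glb_lt => //; move/(autR_lt f): lt_xa; rewrite fx.
  by right; apply: Rmax_lub_lt => //; move/(autR_lt f): lt_ax; rewrite fx.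
have [e e0 eB] := seq_avoids_ball aB.
have [e' e'0 eA'] : exists2 e', 0 < e' & forall x, x \in A' -> x <= a - e' \/ a + e' <= x.
  by apply: seq_avoids_ball; rewrite mem_filter eqxx.
have := Rmin_l e e'; have := Rmin_r e e'; have := Rmin_pos e e' e0 e'0.
set d := Rmin e e' => d0 de' de.
have [q qA qc] := autR_move_near d0 sep.
have [p pqc pout] := @autR_bump (a - d) (a + d) (autR_fun q c) a qc ltac:(lra).
have Kq : K q.
  by apply: KA => x /= xA; apply: qA; rewrite /= in_cons mem_filter xA andbT orbN.
have Kp : K p by apply: KB => x /= /eB xB; apply: pout => /=; lra.
have Kpqf : K (autR_mul p (autR_mul q f)).
  apply: KA => x /= xA; case: (eqVneq x a) => [-> // | xa].
  have xA' : x \in A' by rewrite mem_filter xa.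
  rewrite fA' // qA /= ?in_cons ?xA' ?orbT //.
  by apply: pout => /=; have := eA' x xA'; lra.
have -> : f = autR_mul (autR_inv q) (autR_mul (autR_inv p) (autR_mul p (autR_mul q f))).
  by apply: autR_ext => x /=; rewrite !autR_funK.
exact: KM (KV _ Kq) (KM _ _ (KV _ Kp) Kpqf).
Qed.

(* Induction on #A: either g moves some a of A out of A, and then A shrinks, or
   gA = A and g fixes A pointwise. *)
Lemma pstab_normalizer (K : set autR) (g : autR) (s : seq R) :
  is_subgroup autR_mul autR_inv autR_one K -> pstab [set` s] `<=` K ->
  (forall k, K k -> K (autR_mul g (autR_mul k (autR_inv g)))) -> K g.
Proof.
move=> subK + normK; have [n] := ubnP (size s); elim: n s => // n IHn s.
rewrite ltnS => sz_s Ks.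
have Kgs : pstab [set` map (autR_fun g) s] `<=` K.
  move=> p ps.
  have -> : p = autR_mul g (autR_mul (autR_mul (autR_inv g) (autR_mul p g)) (autR_inv g)).
    by apply: autR_ext => x /=; rewrite !autR_invfK.
  apply/normK/Ks => x /= xs; rewrite ps ?autR_funK //.
  exact: map_f.
case: (boolP (all (fun x => x \in map (autR_fun g) s) s)) => [/allP sgs | /allPn [a as_ ag]].
  apply: Ks => x /= xs.
  have ginv_s y : y \in s -> autR_invf g y \in s.
    by move=> /sgs /mapP [y' y's ->]; rewrite autR_funK.
  have e := increasing_stable_fixed (@autR_invf_incr g) ginv_s xs.
  by rewrite -{1}e autR_invfK.
apply: (IHn [seq x <- s | x != a]); last exact: pstab_remove subK Ks Kgs ag.
apply: (leq_trans _ sz_s); rewrite size_filter -(count_predC (fun x => x != a) s).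
rewrite -{1}[count _ s]addn0 ltn_add2l -has_count.
by apply/hasP; exists a => //=; rewrite eqxx.
Qed.

Lemma open_pstab (K : set autR) : open K -> K autR_one ->
  exists s : seq R, pstab [set` s] `<=` K.
Proof.
move=> oK K1; have /(_ autR_one K1) [F /finite_seqP [s ->] FK] : autR_open K := oK.
by exists s => h /FK; rewrite (_ : autR_mul autR_one h = h) //; exact: autR_ext.
Qed.

Lemma autR_self_normalizing (U : set autR) (g : autR) :
  open_subgroup autR_mul autR_inv autR_one U ->
  (forall k, U k -> U (autR_mul g (autR_mul k (autR_inv g)))) -> U g.
Proof.
move=> [[U1 UM UV] oU] normU; have [s sU] := open_pstab oU U1.
exact: pstab_normalizer (And3 U1 UM UV) sU normU.
Qed.

Theorem proposition5p13 : is_split autR_mul autR_one.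
Proof. exact: self_normalizing_split autR_group autR_self_normalizing. Qed.
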